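(* Let $q=2v+1$ be a prime power with $v$ odd, and suppose there exists an $(\mathbb F_q^\Box,k;n)$ Heffter difference packing $\mathcal F$. Then there exists a $\left(\frac{q-1}{2},k;kn\right)$ Heffter configuration on the point set $\mathbb F_q^\Box$; if every member of $\mathcal F$ admits an ordering whose partial sums are pairwise distinct, then this configuration can be taken so that each block admits such an ordering. Moreover, this configuration can be extended by one further parallel class consisting of blocks of size $\frac{q-1}{2k}$, yielding a Heffter space on $\mathbb F_q^\Box$ with $kn$ parallel classes of block size $k$ and one parallel class of block size $\frac{q-1}{2k}$.
   Context: $\mathbb F_q^\Box$ denotes the multiplicative group of nonzero squares of $\mathbb F_q$; for $q\equiv3\pmod4$ it is a half-set of the additive group of $\mathbb F_q$ (it contains exactly one of $g,-g$ for each $g\ne0$). Fix a group isomorphism $\phi:\mathbb F_q^\Box\to\mathbb Z_v$. An $(\mathbb F_q^\Box,k;n)$ Heffter difference packing is a family $\{B_1,\dots,B_n\}$ of $k$-subsets of $\mathbb F_q^\Box$ such that: the multiset of all differences $a-b$, with $(a,b)$ an ordered pair of distinct elements of a common $\phi(B_i)$, over all $i$, has no repeated element; $k$ divides $v$ and the elements of each $\phi(B_i)$ are pairwise distinct modulo $k$; and each $B_i$ sums to $0$ in $\mathbb F_q$. A $(v,k)$ Heffter system on a half-set $V$ is a partition of $V$ into blocks of size $k$ each summing to $0$. A Heffter space is a partial linear space (any two points in at most one block) on a half-set $V$ with a resolution into parallel classes (partitions of $V$), each a Heffter system; a $(v,k;r)$ Heffter configuration is a Heffter space with $v$ points and $r$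 parallel classes all of block size $k$. *)

From HB Require Import structures.
From mathcomp Require Import all_boot all_order all_algebra.
Set Implicit Arguments. Unset Strict Implicit. Unset Printing Implicit Defensive.
Import GRing.Theory.
Local Open Scope ring_scope.

Section Heffter.
Variable F : finFieldType.

Definition nzsq : {set F} := [set x : F | (x != 0) && [exists y : F, y ^+ 2 == x]].

(* phi : F_q^Box -> Z_v, with Z_v encoded as {0,..,v-1} (nat) with addition mod v;
   phi is a group isomorphism (multiplicative to additive). *)
Definition sq_iso (v : nat) (phi : F -> nat) : Prop :=
  [/\ {in nzsq, forall x, (phi x < v)%N},
      {in nzsq &, injective phi},
      (forall m : nat, (m < v)%N -> exists2 x, x \in nzsq & phi x = m)
    & {in nzsq &, forall x y : F, phi (x * y) = ((phi x + phi y) %% v)%N}].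

Definition zdiff (v : nat) (phi : F -> nat) (a b : F) : nat := ((phi a + v - phi b) %% v)%N.

Definition heffter_diff_packing (v : nat) (phi : F -> nat) (k n : nat)
  (B : 'I_n -> {set F}) : Prop :=
  [/\ (forall i, B i \subset nzsq /\ #|B i| = k),
      (forall (i j : 'I_n) (a b c d : F),
          a \in B i -> b \in B i -> a != b ->
          c \in B j -> d \in B j -> c != d ->
          zdiff v phi a b = zdiff v phi c d -> [/\ i = j, a = c & b = d]),
      (k %| v)%N,
      (forall i, {in B i &, forall a b, phi a %% k = phi b %% k -> a = b}%N)
    & (forall i, \sum_(x in B i) x = 0)].

Definition half_set (V : {set F}) : Prop :=
  0 \notin V /\ forall g : F, g != 0 -> (g \in V) != (- g \in V).

Definition heffter_system (V : {set F}) (k : nat) (P : {set {set F}}) : Prop :=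
  partition P V /\ {in P, forall b : {set F}, #|b| = k /\ \sum_(x in b) x = 0}.

Definition heffter_space (V : {set F}) (m : nat) (C : 'I_m -> {set {set F}}) : Prop :=
  [/\ half_set V,
      (forall j, exists k, heffter_system V k (C j))
    & (forall (i j : 'I_m) (b1 b2 : {set F}) (x y : F),
         b1 \in C i -> b2 \in C j -> x != y ->
         x \in b1 -> y \in b1 -> x \in b2 -> y \in b2 -> i = j /\ b1 = b2)].

Definition heffter_config (V : {set F}) (vv k r : nat) (C : 'I_r -> {set {set F}}) : Prop :=
  [/\ #|V| = vv, heffter_space V C & forall j, heffter_system V k (C j)].

Definition simple_block (b : {set F}) : Prop :=
  exists s : seq F, [/\ uniq s, [set x in s] = b &
    uniq [seq \sum_(x <- take i s) x | i <- iota 1 (size s)]].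

Definition add_class (m : nat) (C : 'I_m -> {set {set F}}) (Q : {set {set F}})
  (j : 'I_m.+1) : {set {set F}} :=
  if unlift ord_max j is Some j' then C j' else Q.

End Heffter.

From HB Require Import structures.
From mathcomp Require Import all_boot all_order all_algebra all_fingroup cyclic zify.
Set Implicit Arguments. Unset Strict Implicit. Unset Printing Implicit Defensive.
Import GRing.Theory.
Local Open Scope ring_scope.

(* Each block B of the packing is spread over the squares by dilation: for a
   residue r mod k, the dilates cB with phi(c) = r (mod k) partition F_q^Box,
   because phi(B) meets every residue class mod k exactly once.  Dilation keeps
   zero sums and the differences phi(a) - phi(b), so two points lie in at most
   one dilate of one block; the k n classes obtained this way form the
   configuration.  The classes of phi mod k are a further Heffter system: each
   is fixed by a dilation c <> 1, hence sums to 0, and it meets every dilate cB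
   in at most one point.  Since v is odd, squaring is injective on F_q^Box, so
   -1 is a non-square and F_q^Box is a half-set. *)

Lemma modn_lt2 v x : (x < 2 * v)%N -> (x %% v = if x < v then x else x - v)%N.
Proof.
case: ifP => [/modn_small //|/negbT]; rewrite -leqNgt => le_vx lt_x2v.
by rewrite -(subnK le_vx) modnDr modn_small //; lia.
Qed.

Lemma card_ord_pred v (P : pred nat) : #|[set m : 'I_v | P m]| = count P (iota 0 v).
Proof.
rewrite -sum1_card -sum1_count -[X in iota 0 X](subn0 v) big_mkord.
by apply: eq_bigl => m; rewrite inE.
Qed.

Lemma count_mod_iota k w s :
  (s < k)%N -> count (fun m => m %% k == s)%N (iota 0 (k * w)) = w.
Proof.
move=> lt_sk; elim: w => [|w IHw]; first by rewrite muln0.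
rewrite mulnS addnC iotaD count_cat IHw add0n -[X in iota X k]addn0 iotaDl count_map.
rewrite (@eq_in_count _ _ (pred1 s)) ?count_uniq_mem ?iota_uniq ?mem_iota ?lt_sk ?addn1 //.
by move=> m; rewrite mem_iota add0n /= => lt_mk; rewrite mulnC modnMDl modn_small.
Qed.

Lemma ltn_div_ord k n (j : 'I_(k * n)) : (j %/ k < n)%N.
Proof.
by case: k j => [[]//|k [j /= lt_j]]; rewrite ltn_divLR // mulnC.
Qed.

Definition div_ord k n (j : 'I_(k * n)) : 'I_n := Ordinal (ltn_div_ord j).

Lemma partition_of_unique_blocks (T : finType) (P : {set {set T}}) (D : {set T}) :
    (forall A : {set T}, A \in P -> A \subset D /\ A != set0) ->
    (forall x, x \in D -> exists2 A, A \in P & x \in A) ->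
    (forall (A A' : {set T}) x, A \in P -> A' \in P -> x \in A -> x \in A' -> A = A') ->
  partition P D.
Proof.
move=> sub_blocks cover_D uniq_block; apply/and3P; split.
- rewrite eqEsubset; apply/andP; split; first by apply/bigcupsP => A /sub_blocks[].
  by apply/subsetP => x /cover_D[A PA Ax]; apply/bigcupP; exists A.
- apply/trivIsetP => A A' PA PA'; apply: contraR => /pred0Pn[x /andP[Ax A'x]].
  by rewrite (uniq_block A A' x).
- by apply/negP => /sub_blocks[_]; rewrite eqxx.
Qed.

Section FiniteField.
Variable F : finFieldType.

Lemma nzsqP (x : F) : reflect (x != 0 /\ exists y, y ^+ 2 = x) (x \in nzsq F).
Proof.
rewrite inE; apply: (iffP andP) => [[-> /existsP[y /eqP]]|[-> [y <-]]]; first by eauto.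
by split=> //; apply/existsP; exists y.
Qed.

Lemma nzsq_neq0 (x : F) : x \in nzsq F -> x != 0.
Proof. by case/nzsqP. Qed.

Lemma nzsqM (x y : F) : x \in nzsq F -> y \in nzsq F -> x * y \in nzsq F.
Proof.
case/nzsqP=> x0 [a ax] /nzsqP[y0 [b yb]]; apply/nzsqP; split; first exact: mulf_neq0.
by exists (a * b); rewrite exprMn ax yb.
Qed.

Lemma nzsqV (x : F) : x \in nzsq F -> x^-1 \in nzsq F.
Proof.
case/nzsqP=> x0 [a ax]; apply/nzsqP; split; first by rewrite invr_neq0.
by exists a^-1; rewrite exprVn ax.
Qed.

Lemma nzsq1 : (1 : F) \in nzsq F.
Proof. by apply/nzsqP; split; [exact: oner_neq0 | exists 1; rewrite expr1n]. Qed.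

Lemma sqr_nzsq (x : F) : x != 0 -> x ^+ 2 \in nzsq F.
Proof. by move=> x0; apply/nzsqP; split; [rewrite expf_neq0 | exists x]. Qed.

Lemma natr_card : (#|F|%:R : F) = 0.
Proof.
have := @expg_cardG _ [set: F]%g (GRing.one F) (in_setT _).
by rewrite FinRing.zmodXgE cardsT.
Qed.

Definition dilate (c : F) (A : {set F}) : {set F} := [set c * x | x in A].

Lemma card_dilate c (A : {set F}) : c != 0 -> #|dilate c A| = #|A|.
Proof. by move=> c0; rewrite card_imset //; apply: mulfI. Qed.

Lemma sum_dilate c (A : {set F}) : c != 0 -> \sum_(x in dilate c A) x = c * \sum_(x in A) x.
Proof. by move=> c0; rewrite big_imset ?mulr_sumr // => x y _ _; apply: mulfI. Qed.

Lemma sum_eq0_dilate_fixed g (A : {set F}) :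
  g != 0 -> g != 1 -> dilate g A = A -> \sum_(x in A) x = 0.
Proof.
move=> g0 g1 gA; have : (1 - g) * \sum_(x in A) x = 0.
  by rewrite mulrBl mul1r -sum_dilate // gA subrr.
by move/eqP; rewrite mulf_eq0 subr_eq0 eq_sym (negbTE g1) => /eqP.
Qed.

Lemma dilate_nzsq c (A : {set F}) x :
  c \in nzsq F -> A \subset nzsq F -> x \in dilate c A -> x \in nzsq F.
Proof. by move=> Sc /subsetP sAS /imsetP[y /sAS Sy ->]; rewrite nzsqM. Qed.

Lemma simple_block_dilate c (A : {set F}) : c != 0 -> simple_block A -> simple_block (dilate c A).
Proof.
move=> c0 [s [uniq_s def_A uniq_sums]]; have inj_c := mulfI c0.
exists (map ( *%R c) s); split; first by rewrite map_inj_uniq.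
  by rewrite -def_A; apply/setP => x; rewrite inE; apply/mapP/imsetP => -[y];
    rewrite ?inE => sy ->; exists y; rewrite ?inE.
rewrite size_map; rewrite -(map_inj_uniq inj_c) -map_comp in uniq_sums.
congr (uniq _): uniq_sums; apply: eq_map => i /=.
by rewrite -map_take big_map mulr_sumr.
Qed.

Lemma heffter_space_add_class (V : {set F}) m (C : 'I_m -> {set {set F}}) Q kQ :
    heffter_space V C -> heffter_system V kQ Q ->
    (forall j b b' x y, b \in C j -> b' \in Q -> x != y ->
       x \in b -> y \in b -> x \in b' -> y \in b' -> False) ->
  heffter_space V (add_class C Q).
Proof.
move=> [half_V sysC plsC] sysQ meetCQ; split=> // [j|i j b1 b2 x y].
  by rewrite /add_class; case: (unliftP ord_max j) => [j'|] _; [exact: sysC | exists kQ].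
have tiQ := partition_trivIset sysQ.1.
rewrite /add_class; case: (unliftP ord_max i) => [i'|] ->; case: (unliftP ord_max j) => [j'|] ->.
- by move=> b1C b2C xy x1 y1 x2 y2; case: (plsC i' j' b1 b2 x y) => // -> ->.
- by move=> b1C b2Q xy x1 y1 x2 y2; case: (meetCQ _ _ _ _ _ b1C b2Q xy x1 y1 x2 y2).
- by move=> b1Q b2C xy x1 y1 x2 y2; case: (meetCQ _ _ _ _ _ b2C b1Q xy x2 y2 x1 y1).
- move=> b1Q b2Q _ x1 _ x2 _; split=> //.
  by rewrite -(def_pblock tiQ b1Q x1) (def_pblock tiQ b2Q x2).
Qed.

End FiniteField.

Section SquareIso.
Variables (F : finFieldType) (v : nat) (phi : F -> nat).
Hypothesis phi_iso : sq_iso v phi.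

Lemma phi_lt x : x \in nzsq F -> (phi x < v)%N.
Proof. by case: phi_iso => lt_phi _ _ _; apply: lt_phi. Qed.

Lemma phi_inj : {in nzsq F &, injective phi}.
Proof. by case: phi_iso. Qed.

Lemma phi_onto m : (m < v)%N -> exists2 x, x \in nzsq F & phi x = m.
Proof. by case: phi_iso => _ _ onto _; apply: onto. Qed.

Lemma phiM x y : x \in nzsq F -> y \in nzsq F -> phi (x * y) = ((phi x + phi y) %% v)%N.
Proof. by case: phi_iso => _ _ _ phiM; apply: phiM. Qed.

Lemma phi1 : phi 1 = 0%N.
Proof.
have lt1v := phi_lt (nzsq1 F); have := phiM (nzsq1 F) (nzsq1 F).
by rewrite mulr1 modn_lt2; [case: ifP => ?; lia | lia].
Qed.

Lemma v_gt0 : (0 < v)%N.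
Proof. by have := phi_lt (nzsq1 F); lia. Qed.

Definition phi_inv (m : nat) : F := odflt 0 [pick x in nzsq F | phi x == m].

Lemma phi_invP m : (m < v)%N -> phi_inv m \in nzsq F /\ phi (phi_inv m) = m.
Proof.
move=> /phi_onto[x Sx phix]; rewrite /phi_inv.
by case: pickP => [y /andP[Sy /eqP]|/(_ x)] //=; rewrite Sx phix eqxx.
Qed.

Lemma card_nzsq_pred (P : pred nat) :
  #|[set x in nzsq F | P (phi x)]| = count P (iota 0 v).
Proof.
have -> : [set x in nzsq F | P (phi x)] = [set phi_inv (val m) | m in [set m : 'I_v | P m]].
  apply/setP => x; rewrite inE; apply/andP/imsetP => [[Sx Px]|[m]].
    exists (Ordinal (phi_lt Sx)); rewrite ?inE //.
    by have [Sy phiK] := phi_invP (phi_lt Sx); apply: phi_inj; rewrite ?phiK.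
  by rewrite inE => Pm ->; have [-> ->] := phi_invP (ltn_ord m).
rewrite card_in_imset ?card_ord_pred // => m1 m2 _ _ /(congr1 phi).
by rewrite (phi_invP (ltn_ord m1)).2 (phi_invP (ltn_ord m2)).2 => /val_inj.
Qed.

Lemma card_nzsq : #|nzsq F| = v.
Proof.
rewrite -[RHS](size_iota 0) -(count_predT (iota 0 v)) -card_nzsq_pred.
by apply: eq_card => x; rewrite inE andbT.
Qed.

Lemma zdiff_dilate g a b : g \in nzsq F -> a \in nzsq F -> b \in nzsq F ->
  zdiff v phi (g * a) (g * b) = zdiff v phi a b.
Proof.
move=> Sg Sa Sb; move: (phi_lt Sg) (phi_lt Sa) (phi_lt Sb); rewrite /zdiff !phiM //.
move: (phi g) (phi a) (phi b) => x y z lt_xv lt_yv lt_zv.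
rewrite [((x + y) %% v)%N]modn_lt2 ?[((x + z) %% v)%N]modn_lt2; try lia.
by case: (ltnP (x + y) v) (ltnP (x + z) v) => ? [] ?; rewrite !modn_lt2; do ?case: ifP => ?; lia.
Qed.

Hypothesis v_odd : odd v.

Lemma sqr_nzsq_inj : {in nzsq F &, injective (fun x : F => x ^+ 2)}.
Proof.
move=> x y Sx Sy /= sqr_xy; apply: phi_inj => //.
have := phiM Sx Sx; rewrite -expr2 sqr_xy phiM // modn_lt2; last by have := phi_lt Sy; lia.
rewrite modn_lt2; last by have := phi_lt Sx; lia.
have := phi_lt Sx; have := phi_lt Sy; have := odd_double_half v; rewrite v_odd.
by do 2 case: ifP => ?; lia.
Qed.

Lemma nzsq_sqrt x : x \in nzsq F -> exists2 s, s \in nzsq F & s ^+ 2 = x.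
Proof.
have sqr_onto : [set s ^+ 2 | s in nzsq F] = nzsq F.
  apply/eqP; rewrite eqEcard card_in_imset; last exact: sqr_nzsq_inj.
  rewrite leqnn andbT; apply/subsetP => _ /imsetP[s Ss ->].
  by rewrite sqr_nzsq ?nzsq_neq0.
move=> Sx; have /imsetP[s Ss ->] : x \in [set s ^+ 2 | s in nzsq F] by rewrite sqr_onto.
by exists s.
Qed.

Hypothesis F_odd : odd #|F|.

Lemma Nm1_notin_nzsq : (-1 : F) \notin nzsq F.
Proof.
apply/negP => Sm1; have m1_1 : (-1 : F) = 1.
  by apply: sqr_nzsq_inj; rewrite ?nzsq1 // sqrrN.
have two0 : (2%:R : F) = 0 by rewrite -[2%N]/(1 + 1)%N natrD -{1}m1_1 addNr.
have := natr_card F; rewrite -(odd_double_half #|F|) F_odd -mul2n natrD natrM two0.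
by rewrite mul0r addr0 => /eqP; rewrite oner_eq0.
Qed.

Lemma nzsqN x : x \in nzsq F -> - x \notin nzsq F.
Proof.
move=> Sx; apply: contra Nm1_notin_nzsq => SNx.
by have := nzsqM SNx (nzsqV Sx); rewrite mulNr mulfV ?nzsq_neq0.
Qed.

Lemma half_set_nzsq : half_set (nzsq F).
Proof.
split=> [|g g0]; first by apply/negP => /nzsq_neq0; rewrite eqxx.
have [s Ss /eqP] := nzsq_sqrt (sqr_nzsq g0).
rewrite -subr_eq0 subr_sqr mulf_eq0 subr_eq0 addr_eq0 => /orP[] /eqP def_s.
  by rewrite -def_s Ss (negbTE (nzsqN Ss)).
have SNg : - g \in nzsq F by rewrite -def_s.
by rewrite SNg; have := nzsqN SNg; rewrite opprK => /negbTE ->.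
Qed.

End SquareIso.

Section Packing.
Variables (F : finFieldType) (v : nat) (phi : F -> nat) (k n : nat) (B : 'I_n -> {set F}).
Hypothesis phi_iso : sq_iso v phi.
Hypothesis packing : heffter_diff_packing v phi k B.

Lemma block_nzsq i x : x \in B i -> x \in nzsq F.
Proof. by case: packing => sub _ _ _ _; case: (sub i) => /subsetP sBS _; apply: sBS. Qed.

Lemma card_block i : #|B i| = k.
Proof. by case: packing => sub _ _ _ _; case: (sub i). Qed.

Lemma k_dvd_v : (k %| v)%N.
Proof. by case: packing. Qed.

Lemma block_residue_inj i : {in B i &, forall a b, phi a %% k = phi b %% k -> a = b}%N.
Proof. by case: packing => _ _ _ res _; apply: res. Qed.

Lemma sum_block i : \sum_(x in B i) x = 0.
Proof. by case: packing. Qed.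

Lemma block_zdiff_inj (i j : 'I_n) (a b c d : F) :
  a \in B i -> b \in B i -> a != b -> c \in B j -> d \in B j -> c != d ->
  zdiff v phi a b = zdiff v phi c d -> [/\ i = j, a = c & b = d].
Proof. by case: packing => _ zd _ _ _; apply: zd. Qed.

Lemma k_gt0 : (0 < k)%N.
Proof.
by rewrite lt0n; apply: contraTneq k_dvd_v => ->; rewrite dvd0n -lt0n (v_gt0 phi_iso).
Qed.

Lemma k_lt_v : (0 < n)%N -> (k < v)%N.
Proof.
move=> n_gt0; rewrite ltn_neqAle (dvdn_leq (v_gt0 phi_iso) k_dvd_v) andbT.
apply/eqP => kv.
pose i0 : 'I_n := Ordinal n_gt0.
have B_S : B i0 = nzsq F.
  by apply/eqP; rewrite eqEcard card_block kv (card_nzsq phi_iso) leqnn andbT;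
    apply/subsetP => x /block_nzsq.
have [v_le1|v_gt1] := leqP v 1.
  have /cards1P[x Bx] : #|B i0| == 1%N by rewrite card_block kv eqn_leq v_le1 (v_gt0 phi_iso).
  have Bx0 : x \in B i0 by rewrite Bx set11.
  by move: (sum_block i0) (nzsq_neq0 (block_nzsq Bx0)); rewrite Bx big_set1 => ->; rewrite eqxx.
have [g Sg phig] := phi_onto phi_iso v_gt1.
have g1 : 1 != g by apply: contra_eqN phig => /eqP <-; rewrite (phi1 phi_iso).
have S1 := nzsq1 F; have inB x : x \in nzsq F -> x \in B i0 by rewrite B_S.
have g_gg : g * 1 != g * g by rewrite (inj_eq (mulfI (nzsq_neq0 Sg))).
(* the pairs (1, g) and (g, g^2) of the block F_q^Box have the same difference *)
have [_ /eqP] := block_zdiff_inj (inB _ S1) (inB _ Sg) g1 (inB _ (nzsqM Sg S1))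
  (inB _ (nzsqM Sg Sg)) g_gg (esym (zdiff_dilate phi_iso Sg S1 Sg)).
by rewrite mulr1 (negbTE g1).
Qed.

Lemma phiM_modk c b : c \in nzsq F -> b \in nzsq F ->
  (phi (c * b)%R %% k = (phi c + phi b) %% k)%N.
Proof. by move=> Sc Sb; rewrite (phiM phi_iso) // modn_dvdm // k_dvd_v. Qed.

Lemma block_residue_onto i t : (t < k)%N -> exists2 b, b \in B i & (phi b %% k = t)%N.
Proof.
move=> lt_tk; pose res b : 'I_k := Ordinal (ltn_pmod (phi b) k_gt0).
have res_inj : {in B i &, injective res}.
  by move=> a b Ba Bb /(congr1 val) /(block_residue_inj Ba Bb).
have : res @: B i = [set: 'I_k].
  apply/eqP; rewrite eqEcard subsetT cardsT card_ord card_in_imset //.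
  exact/eq_leq/esym/card_block.
by move/setP/(_ (Ordinal lt_tk)); rewrite inE => /imsetP[b Bb [tE]]; exists b.
Qed.

Definition dilate_class (i : 'I_n) (r : nat) : {set {set F}} :=
  [set dilate c (B i) | c in [set c in nzsq F | phi c %% k == r]%N].

Lemma dilate_class_block i r b : b \in dilate_class i r ->
  exists c, [/\ c \in nzsq F, (phi c %% k = r)%N & b = dilate c (B i)].
Proof. by case/imsetP => c; rewrite inE => /andP[Sc /eqP rc] ->; exists c. Qed.

Lemma dilate_block_pls c1 c2 i1 i2 x y : c1 \in nzsq F -> c2 \in nzsq F -> x != y ->
  x \in dilate c1 (B i1) -> y \in dilate c1 (B i1) ->
  x \in dilate c2 (B i2) -> y \in dilate c2 (B i2) -> i1 = i2 /\ c1 = c2.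
Proof.
move=> Sc1 Sc2 xy /imsetP[a1 Ba1 x1] /imsetP[b1 Bb1 y1] /imsetP[a2 Ba2 x2] /imsetP[b2 Bb2 y2].
have ab1 : a1 != b1 by move: xy; rewrite x1 y1; apply: contra_neq => ->.
have ab2 : a2 != b2 by move: xy; rewrite x2 y2; apply: contra_neq => ->.
have := zdiff_dilate phi_iso Sc1 (block_nzsq Ba1) (block_nzsq Bb1).
rewrite -x1 -y1 x2 y2 zdiff_dilate ?(block_nzsq Ba2) ?(block_nzsq Bb2) //.
case/(block_zdiff_inj Ba2 Bb2 ab2 Ba1 Bb1 ab1) => -> a21 _; split=> //.
by apply: (mulIf (nzsq_neq0 (block_nzsq Ba1))); rewrite -x1 x2 a21.
Qed.

Lemma dilate_class_system i r : (r < k)%N -> heffter_system (nzsq F) k (dilate_class i r).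
Proof.
move=> lt_rk; split=> [|_ /dilate_class_block[c [Sc _ ->]]]; last first.
  by rewrite card_dilate ?sum_dilate ?nzsq_neq0 // card_block sum_block mulr0.
apply: partition_of_unique_blocks.
- move=> _ /dilate_class_block[c [Sc _ ->]]; split.
    by apply/subsetP => x; apply: dilate_nzsq => //; apply/subsetP => y /block_nzsq.
  by rewrite -card_gt0 card_dilate ?nzsq_neq0 // card_block k_gt0.
- (* pick b with phi b = phi x - r (mod k); then x lies in the block (x / b) B *)
  move=> x Sx; have [b Bb res_b] := block_residue_onto i (ltn_pmod (phi x + (k - r)) k_gt0).
  have Sb := block_nzsq Bb; have Sxb : x / b \in nzsq F by rewrite nzsqM ?nzsqV.
  have x_eq : x = x / b * b by rewrite divfK ?nzsq_neq0.
  exists (dilate (x / b) (B i)); last by apply/imsetP; exists b.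
  apply: imset_f; rewrite inE Sxb /=; apply/eqP.
  have : (phi (x / b) + phi b = r + phi b %[mod k])%N.
    by rewrite -phiM_modk // -x_eq -modnDmr res_b modnDmr addnCA subnKC ?modnDr // ltnW.
  by move/eqP; rewrite eqn_modDr (modn_small lt_rk) => /eqP.
- move=> _ _ x /dilate_class_block[c1 [Sc1 r1 ->]] /dilate_class_block[c2 [Sc2 r2 ->]].
  move=> /imsetP[b1 Bb1 ->] /imsetP[b2 Bb2 xE].
  have := phiM_modk Sc1 (block_nzsq Bb1); rewrite xE phiM_modk ?(block_nzsq Bb2) //.
  rewrite -modnDml r2 -r1 modnDml => /eqP; rewrite eqn_modDl => /eqP.
  move/(block_residue_inj Bb2 Bb1) => b21.
  by move: xE; rewrite b21 => /(mulIf (nzsq_neq0 (block_nzsq Bb1))) ->.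
Qed.

Definition residue_class : {set {set F}} := preim_partition (fun x => phi x %% k)%N (nzsq F).

Lemma card_residue_block x : x \in nzsq F ->
  #|[set y in nzsq F | phi x %% k == phi y %% k]%N| = (v %/ k)%N.
Proof.
move=> Sx; rewrite (card_nzsq_pred phi_iso (fun m => phi x %% k == m %% k)%N).
have -> : iota 0 v = iota 0 (k * (v %/ k)) by rewrite mulnC divnK // k_dvd_v.
rewrite -[RHS](count_mod_iota (v %/ k) (ltn_pmod (phi x) k_gt0)).
by apply: eq_count => m; rewrite /= eq_sym.
Qed.

Lemma sum_residue_block x : (0 < n)%N ->
  \sum_(y in [set y in nzsq F | phi x %% k == phi y %% k]%N) y = 0.
Proof.
move=> n_gt0; have [g Sg phig] := phi_onto phi_iso (k_lt_v n_gt0).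
have g1 : g != 1 by apply: contra_eqN phig => /eqP ->; rewrite (phi1 phi_iso) eq_sym -lt0n k_gt0.
apply: (sum_eq0_dilate_fixed (nzsq_neq0 Sg) g1); apply/eqP.
rewrite eqEcard card_dilate ?nzsq_neq0 // leqnn andbT.
apply/subsetP => _ /imsetP[y + ->]; rewrite in_set => /andP[Sy xy].
by rewrite in_set nzsqM //= phiM_modk // phig modnDl.
Qed.

Lemma residue_class_system : (0 < n)%N -> heffter_system (nzsq F) (v %/ k) residue_class.
Proof.
move=> n_gt0; split; first exact: preim_partitionP.
by move=> _ /imsetP[x Sx ->]; rewrite card_residue_block ?sum_residue_block.
Qed.

Lemma dilate_block_residue_meet c i A x y : c \in nzsq F -> A \in residue_class -> x != y ->
  x \in dilate c (B i) -> y \in dilate c (B i) -> x \in A -> y \in A -> False.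
Proof.
move=> Sc /imsetP[z Sz ->] xy /imsetP[a Ba xa] /imsetP[b Bb yb].
rewrite !inE => /andP[_ /eqP zx] /andP[_ /eqP zy].
have : (phi c + phi a = phi c + phi b %[mod k])%N.
  by rewrite -!phiM_modk ?(block_nzsq Ba) ?(block_nzsq Bb) // -xa -yb -zx -zy.
move/eqP; rewrite eqn_modDl => /eqP /(block_residue_inj Ba Bb) ab.
by move: xy; rewrite xa yb ab eqxx.
Qed.

Definition packing_class (j : 'I_(k * n)) : {set {set F}} := dilate_class (div_ord j) (j %% k).

Lemma packing_class_system j : heffter_system (nzsq F) k (packing_class j).
Proof. exact: dilate_class_system (ltn_pmod _ k_gt0). Qed.

Lemma packing_class_pls (i j : 'I_(k * n)) b1 b2 x y :
  b1 \in packing_class i -> b2 \in packing_class j -> x != y ->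
  x \in b1 -> y \in b1 -> x \in b2 -> y \in b2 -> i = j /\ b1 = b2.
Proof.
move=> /dilate_class_block[c1 [Sc1 r1 ->]] /dilate_class_block[c2 [Sc2 r2 ->]] xy x1 y1 x2 y2.
have [/(congr1 val) /= ij c12] := dilate_block_pls Sc1 Sc2 xy x1 y1 x2 y2.
have eq_ij : i = j.
  by apply/val_inj; rewrite /= (divn_eq i k) (divn_eq j k) -r1 -r2 c12 ij.
by rewrite eq_ij c12.
Qed.

End Packing.

Theorem corollary4p4 (F : finFieldType) (v : nat) (phi : F -> nat) (k n : nat)
    (B : 'I_n -> {set F}) :
  #|F| = (2 * v).+1 -> odd v -> sq_iso v phi -> (0 < n)%N ->
  heffter_diff_packing v phi k B ->
  exists C : 'I_(k * n) -> {set {set F}},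
    [/\ heffter_config (nzsq F) ((#|F|).-1 %/ 2) k C,
        ((forall i, simple_block (B i)) ->
           forall j, {in C j, forall b, simple_block b})
      & exists Q : {set {set F}},
          heffter_system (nzsq F) ((#|F|).-1 %/ (2 * k)) Q /\
          heffter_space (nzsq F) (add_class C Q)].
Proof.
move=> cardF v_odd phi_iso n_gt0 packing.
have F_odd : odd #|F| by rewrite cardF /= mul2n odd_double.
have C_space : heffter_space (nzsq F) (packing_class phi (k := k) B).
  split; first exact: half_set_nzsq phi_iso v_odd F_odd.
    by move=> j; exists k; apply: packing_class_system phi_iso packing j.
  exact: packing_class_pls phi_iso packing.
have Q_system := residue_class_system phi_iso packing n_gt0.
exists (packing_class phi B); split.
- split=> //; last exact: packing_class_system phi_iso packing.
  by rewrite (card_nzsq phi_iso) cardF /= mulKn.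
- move=> simpleB j _ /dilate_class_block[c [Sc _ ->]].
  exact/simple_block_dilate/simpleB/nzsq_neq0.
- exists (residue_class phi k); split; first by rewrite cardF /= divnMl.
  apply: (heffter_space_add_class C_space Q_system).
  move=> j b b' x y /dilate_class_block[c [Sc _ ->]].
  exact: (dilate_block_residue_meet phi_iso packing Sc).
Qed.
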